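(* Let $F$ be a field of characteristic zero and $r$ a positive integer. Let $\mathfrak{L}$ be an $(r+1)$-dimensional solvable, non-nilpotent (left) Leibniz algebra over $F$ whose nilradical is the $r$-dimensional abelian algebra $A(r)$. Choose a basis $\{n_1,\dots,n_r,x\}$ of $\mathfrak{L}$ with $n_1,\dots,n_r$ a basis of $A(r)$ and $x\in\mathfrak{L}\setminus A(r)$. Then $[n_i,n_j]=0$ for all $i,j$, and there are matrices $L,R\in F^{r\times r}$ and a vector $\sigma=(\sigma_1,\dots,\sigma_r)^T\in F^r$ such that $$[x,n_i]=\sum_j L_{ij}n_j,\qquad [n_i,x]=\sum_jR_{ij}n_j,\qquad [x,x]=\sum_j\sigma_jn_j,$$ and $\sigma$ lies in the null space of $R^T$ (i.e. $R^T\sigma=0$).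
   Context: A (left) Leibniz algebra is a vector space with bilinear product satisfying $[x,[y,z]]=[[x,y],z]+[y,[x,z]]$. Solvable: derived series $\mathfrak{L}^{(1)}=[\mathfrak{L},\mathfrak{L}]$, $\mathfrak{L}^{(n+1)}=[\mathfrak{L}^{(n)},\mathfrak{L}^{(n)}]$ eventually zero. Nilpotent: lower central series $\mathfrak{L}^2=[\mathfrak{L},\mathfrak{L}]$, $\mathfrak{L}^{k+1}=[\mathfrak{L},\mathfrak{L}^k]$ eventually zero. Nilradical: the unique maximal nilpotent ideal. $A(r)$ is the $r$-dimensional algebra with all products zero. *)

From HB Require Import structures.
From mathcomp Require Import all_boot all_order all_algebra.
Set Implicit Arguments. Unset Strict Implicit. Unset Printing Implicit Defensive.
Import GRing.Theory.
Local Open Scope ring_scope.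

Section Leibniz.
Variables (F : fieldType) (V : vectType F) (br : V -> V -> V).

Definition bilinear_br : Prop :=
  (forall (a : F) (u v w : V), br (a *: u + v) w = a *: br u w + br v w) /\
  (forall (a : F) (u v w : V), br w (a *: u + v) = a *: br w u + br w v).

Definition left_leibniz : Prop :=
  forall x y z : V, br x (br y z) = br (br x y) z + br y (br x z).

Definition brsp (A B : {vspace V}) : {vspace V} :=
  <<[seq br u v | u <- vbasis A, v <- vbasis B]>>%VS.

Definition is_ideal (I : {vspace V}) : Prop :=
  (brsp fullv I <= I)%VS /\ (brsp I fullv <= I)%VS.

Fixpoint derived (I : {vspace V}) (k : nat) : {vspace V} :=
  if k is k'.+1 then brsp (derived I k') (derived I k') else I.

Fixpoint lcs (I : {vspace V}) (k : nat) : {vspace V} :=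
  if k is k'.+1 then brsp I (lcs I k') else I.

Definition solvable_alg (I : {vspace V}) : Prop :=
  exists k, derived I k = 0%VS.

Definition nilpotent_alg (I : {vspace V}) : Prop :=
  exists k, lcs I k = 0%VS.

Definition is_nilradical (N : {vspace V}) : Prop :=
  [/\ is_ideal N, nilpotent_alg N &
      forall I : {vspace V}, is_ideal I -> nilpotent_alg I -> (I <= N)%VS].

(* N is isomorphic to the abelian algebra A(r) *)
Definition is_abelian_of_dim (N : {vspace V}) (r : nat) : Prop :=
  \dim N = r /\ brsp N N = 0%VS.

End Leibniz.

From HB Require Import structures.
From mathcomp Require Import all_boot all_order all_algebra.
Import GRing.Theory.
Local Open Scope ring_scope.

Set Implicit Arguments. Unset Strict Implicit.

(* The Leibniz identity with x = y gives [[x,x],z] = 0, so [x,x] annihilates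
   from the left.  Were [x,x] = c x + m with c <> 0 and m in the abelian ideal
   N, left multiplication by x would agree with that by -m/c; then [L,L] lies
   in N and [L,[L,L]] = 0, so L would be nilpotent.  Hence [x,x] is in N, and
   expanding 0 = [[x,x],x] = sum_i sigma_i [n_i,x] in the basis (n_j) gives
   R^T sigma = 0. *)

Section Bracket.
Variables (F : fieldType) (V : vectType F) (br : V -> V -> V).
Hypothesis br_bilinear : bilinear_br br.

Lemma brDl u v w : br (u + v) w = br u w + br v w.
Proof. by case: br_bilinear => H _; have := H 1 u v w; rewrite !scale1r. Qed.

Lemma brDr u v w : br w (u + v) = br w u + br w v.
Proof. by case: br_bilinear => _ H; have := H 1 u v w; rewrite !scale1r. Qed.

Lemma br0l w : br 0 w = 0.
Proof. by apply: (addIr (br 0 w)); rewrite add0r -brDl addr0. Qed.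

Lemma br0r w : br w 0 = 0.
Proof. by apply: (addIr (br w 0)); rewrite add0r -brDr addr0. Qed.

Lemma brZl a u w : br (a *: u) w = a *: br u w.
Proof.
by case: br_bilinear => H _; have := H a u 0 w; rewrite addr0 br0l addr0.
Qed.

Lemma brZr a u w : br w (a *: u) = a *: br w u.
Proof.
by case: br_bilinear => _ H; have := H a u 0 w; rewrite addr0 br0r addr0.
Qed.

Lemma brsuml (I : Type) (s : seq I) (f : I -> V) w :
  br (\sum_(i <- s) f i) w = \sum_(i <- s) br (f i) w.
Proof.
by elim: s => [|a s IH]; rewrite ?big_nil ?br0l // !big_cons brDl IH.
Qed.

Lemma brsumr (I : Type) (s : seq I) (f : I -> V) w :
  br w (\sum_(i <- s) f i) = \sum_(i <- s) br w (f i).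
Proof.
by elim: s => [|a s IH]; rewrite ?big_nil ?br0r // !big_cons brDr IH.
Qed.

Lemma mem_brsp (A B : {vspace V}) u v :
  u \in A -> v \in B -> br u v \in brsp br A B.
Proof.
move=> uA vB; rewrite (coord_vbasis uA) (coord_vbasis vB) brsuml.
apply: memv_suml => i _; rewrite brZl brsumr; apply: memvZ.
apply: memv_suml => j _; rewrite brZr; apply: memvZ.
by apply/memv_span/allpairs_f; apply: mem_nth; rewrite size_tuple.
Qed.

Lemma brsp_subv (A B S : {vspace V}) :
  (forall u v, u \in A -> v \in B -> br u v \in S) -> (brsp br A B <= S)%VS.
Proof.
move=> brABS; apply/span_subvP => _ /allpairsP [[u v] [/= uA vB ->]].
by apply: brABS; apply: vbasis_mem.
Qed.

Lemma ideal_brl (N : {vspace V}) u m :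
  is_ideal br N -> m \in N -> br u m \in N.
Proof. by case=> idN _ mN; apply: (subvP idN); rewrite mem_brsp ?memvf. Qed.

Lemma ideal_brr (N : {vspace V}) u m :
  is_ideal br N -> m \in N -> br m u \in N.
Proof. by case=> _ idN mN; apply: (subvP idN); rewrite mem_brsp ?memvf. Qed.

Lemma abelian_br0 (N : {vspace V}) m m' :
  brsp br N N = 0%VS -> m \in N -> m' \in N -> br m m' = 0.
Proof. by move=> NN0 mN m'N; apply/eqP; rewrite -memv0 -NN0 mem_brsp. Qed.

End Bracket.

Lemma leibniz_sqrl0 (F : fieldType) (V : vectType F) (br : V -> V -> V) x y :
  left_leibniz br -> br (br x x) y = 0.
Proof. by move=> leib; apply: (addIr (br x (br x y))); rewrite add0r -leib. Qed.

Lemma addv_line_full (F : fieldType) (V : vectType F) (N : {vspace V}) x :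
    \dim (fullv : {vspace V}) = (\dim N).+1 -> x \notin N ->
  (N + <[x]>)%VS = fullv.
Proof.
move=> dimV xN; have x0 : x != 0 by apply: contraNneq xN => ->; rewrite mem0v.
apply/eqP; rewrite eqEdim subvf dimV dimv_disjoint_sum ?dim_vline ?x0.
  by rewrite addn1 ltnSn.
apply/eqP; rewrite -subv0; apply/subvP => z /memv_capP [zN /vlineP [k Ez]].
rewrite memv0 Ez; have [->|k0] := eqVneq k 0; first by rewrite scale0r.
by case/negP: xN; rewrite -(scalerK k0 x) memvZ -?Ez.
Qed.

Section AbelianIdealOfCodimOne.
Variables (F : fieldType) (V : vectType F) (br : V -> V -> V).
Variables (N : {vspace V}) (x : V).
Hypotheses (br_bilinear : bilinear_br br) (N_ideal : is_ideal br N).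
Hypotheses (N_abelian : brsp br N N = 0%VS) (xN : x \notin N).
Hypothesis dimV : \dim (fullv : {vspace V}) = (\dim N).+1.

Lemma decomp_line_ideal u : exists c, exists2 m, m \in N & u = c *: x + m.
Proof.
have : u \in (N + <[x]>)%VS by rewrite addv_line_full ?memvf.
by case/memv_addP => m mN [_ /vlineP [c ->] ->]; exists c, m; rewrite 1?addrC.
Qed.

Lemma nilpotent_of_brl_ideal m :
  m \in N -> (forall v, br x v = br m v) -> nilpotent_alg br fullv.
Proof.
move=> mN brx; have brl_N u v : v \in N -> br u v = 0.
  have [c [m' m'N ->]] := decomp_line_ideal u => vN.
  rewrite (brDl br_bilinear) (brZl br_bilinear) brx.
  by rewrite !(abelian_br0 _ N_abelian) // scaler0 addr0.
have derV_N : (brsp br fullv fullv <= N)%VS.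
  apply: brsp_subv => u v _ _; have [c [m' m'N ->]] := decomp_line_ideal u.
  rewrite (brDl br_bilinear) (brZl br_bilinear) brx.
  by rewrite memvD ?memvZ ?(ideal_brr br_bilinear _ N_ideal).
exists 2%N; apply/eqP; rewrite -subv0; apply: brsp_subv => u v _ vLL.
by rewrite brl_N ?mem0v ?(subvP derV_N _ vLL).
Qed.

Lemma sqr_mem_ideal :
  left_leibniz br -> ~ nilpotent_alg br fullv -> br x x \in N.
Proof.
move=> leib notnil; have [c [m mN xx]] := decomp_line_ideal (br x x).
have [c_eq0|c0] := eqVneq c 0; first by rewrite xx c_eq0 scale0r add0r.
case: notnil; apply: (nilpotent_of_brl_ideal (m := - c^-1 *: m)).
  by rewrite memvZ.
move=> v; have /eqP := leibniz_sqrl0 x v leib.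
rewrite xx (brDl br_bilinear) (brZl br_bilinear) addr_eq0 => /eqP cxv.
by rewrite (brZl br_bilinear) scaleNr -scalerN -cxv scalerA mulVf // scale1r.
Qed.

End AbelianIdealOfCodimOne.

Lemma free_trmx_mulmx_eq0 (F : fieldType) (V : vectType F) (r : nat)
    (n : 'I_r -> V) (Rm : 'M[F]_r) (sigma : 'cV[F]_r) :
  free [tuple n i | i < r] ->
  \sum_(i < r) sigma i 0 *: \sum_(j < r) Rm i j *: n j = 0 ->
  Rm^T *m sigma = 0.
Proof.
move=> /freeP free_n sum0; apply/matrixP => j k; rewrite ord1 !mxE.
apply: (free_n (fun j => \sum_(i < r) Rm^T j i * sigma i 0)).
rewrite -[RHS]sum0.
under [RHS]eq_bigr do rewrite scaler_sumr.
rewrite [RHS]exchange_big; apply: eq_bigr => j' _.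
rewrite nth_mktuple scaler_suml.
by apply: eq_bigr => i _; rewrite mxE scalerA mulrC.
Qed.

Theorem theorem4p3 (F : fieldType) (V : vectType F) (br : V -> V -> V)
    (r : nat) (N : {vspace V}) (n : 'I_r -> V) (x : V) :
  [pchar F] =i pred0 ->
  (0 < r)%N ->
  bilinear_br br -> left_leibniz br ->
  \dim (fullv : {vspace V}) = r.+1 ->
  solvable_alg br fullv -> ~ nilpotent_alg br fullv ->
  is_nilradical br N -> is_abelian_of_dim br N r ->
  basis_of N [seq n i | i <- enum 'I_r] ->
  x \notin N ->
  (forall i j : 'I_r, br (n i) (n j) = 0) /\
  exists (Lm Rm : 'M[F]_r) (sigma : 'cV[F]_r),
    [/\ forall i : 'I_r, br x (n i) = \sum_(j < r) Lm i j *: n j,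
        forall i : 'I_r, br (n i) x = \sum_(j < r) Rm i j *: n j,
        br x x = \sum_(j < r) sigma j 0 *: n j
      & Rm^T *m sigma = 0].
Proof.
move=> _ _ brB leib dimV _ notnil [N_ideal _ _] [dimN N_abelian] basis_n xN.
pose T := [tuple n i | i < r].
have nN i : n i \in N by apply: (basis_mem basis_n); rewrite map_f ?mem_enum.
have expand v : v \in N -> v = \sum_(j < r) coord T j v *: n j.
  move=> vN; rewrite {1}(coord_basis (X := T) basis_n vN).
  by apply: eq_bigr => j _; rewrite nth_mktuple.
have xxN : br x x \in N.
  by apply: (sqr_mem_ideal brB N_ideal N_abelian); rewrite ?dimN.
split=> [i j|]; first exact: abelian_br0 N_abelian (nN i) (nN j).
exists (\matrix_(i, j) coord T j (br x (n i))),
       (\matrix_(i, j) coord T j (br (n i) x)), (\col_j coord T j (br x x)).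
split=> [i|i||].
- by under eq_bigr do rewrite mxE; apply/expand/(ideal_brl brB _ N_ideal).
- by under eq_bigr do rewrite mxE; apply/expand/(ideal_brr brB _ N_ideal).
- by under eq_bigr do rewrite mxE; apply: expand.
apply: (free_trmx_mulmx_eq0 (n := n)); first by case/andP: basis_n.
transitivity (br (br x x) x); last exact: leibniz_sqrl0.
rewrite {2}(expand _ xxN) (brsuml brB); apply: eq_bigr => i _.
rewrite !mxE (brZl brB) (expand _ (ideal_brr brB _ N_ideal (nN i))).
by under eq_bigr do rewrite mxE.
Qed.
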